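(* Fix any total budget $\mathrm{TB}\in\mathbb N_0$. For every $k\in\mathbb N$, the disjunctive sum $1/2^k+1/2^k=1/2^{k-1}$.
   Context: Game forms are defined recursively: $G=\{G^{\mathcal L}\mid G^{\mathcal R}\}$ with finite sets of Left and Right options, and finite birthday. $0=\{\varnothing\mid\varnothing\}$, $1=\{0\mid\varnothing\}$. Dyadic game forms: $1/2^0=1$ and for $k\in\mathbb N$, $1/2^k=\{0\mid 1/2^{k-1}\}$. The budget set for total budget $\mathrm{TB}$ is $\mathcal B=\{0,\dots,\mathrm{TB},\hat 0,\dots,\widehat{\mathrm{TB}}\}$: state $p$ (resp. $\hat p$) means Left holds $p$ dollars and Right holds $\mathrm{TB}-p$, and Right (resp. Left) holds the tie-breaking marker. Play of $(G,\tilde p)$: at every position (terminal ones included) both players bid simultaneously, Left $\ell\in\{0,\dots,p\}$, Right $r\in\{0,\dots,\mathrm{TB}-p\}$. If Left holds the marker (state $\hat p$): if $\ell>r$ Left moves to $(G^L,\widehat{p-\ell})$, or, including the marker (allowed when $\ell\ge r$), to $(G^L,p-\ell)$; if $\ell=r$ Left wins, the marker passes to Right, play continues at $(G^L,p-\ell)$; if $\ell<r$ Right moves to $(G^R,\widehat{p+r})$. Symmetrically when Right holds the marker (state $p$): if $r>\ell$ Right moves to $(G^R,p+r)$ or, including the marker, to $(G^R,\widehat{p+r})$; if $r=\ell$ Right wins, the marker passes to Left, play continues at $(G^R,\widehat{p+r})$; if $r<\ell$ Left moves to $(G^L,p-\ell)$. A player who wins a bid but has no option loses. $o(G,\tilde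 p)\in\{\mathrm L,\mathrm R\}$ is the winner under optimal play; $\mathrm L>\mathrm R$. Disjunctive sum $G+H=\{G^{\mathcal L}+H,G+H^{\mathcal L}\mid G^{\mathcal R}+H,G+H^{\mathcal R}\}$. $G\ge H$ means $o(G+X,\tilde p)\ge o(H+X,\tilde p)$ for all game forms $X$ and all $\tilde p\in\mathcal B$; $G=H$ means $G\ge H$ and $H\ge G$. *)

From mathcomp Require Import all_boot.
Set Implicit Arguments. Unset Strict Implicit. Unset Printing Implicit Defensive.

Inductive game : Type := Game : seq game -> seq game -> game.

Definition gzero : game := Game [::] [::].
Definition gone : game := Game [:: gzero] [::].

(* dyadic game forms: dyad k = 1/2^k *)
Fixpoint dyad (k : nat) : game :=
  match k with
  | 0 => gone
  | k'.+1 => Game [:: gzero] [:: dyad k']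
  end.

Fixpoint gadd (G : game) : game -> game :=
  fix gaddG (H : game) : game :=
    match G, H with
    | Game gl gr, Game hl hr =>
      Game (map (fun x => gadd x H) gl ++ map gaddG hl)
           (map (fun x => gadd x H) gr ++ map gaddG hr)
    end.

(* Budget state: (p, m) with p = Left's dollars (Right holds TB - p);
   m = true means Left holds the tie-breaking marker (state \hat p),
   m = false means Right holds it (state p).
   winL TB G p m = true iff Left has a bid l in {0..p} such that for every Right bid r in {0..TB-p},
   Left wins under optimal continuation (the game is determined). *)
Fixpoint winL (TB : nat) (G : game) (p : nat) (m : bool) {struct G} : bool :=
  match G with
  | Game Ls Rs =>
    has (fun l : nat => all (fun r : nat =>
      if m then
        (if r < l then
           has (fun GL => winL TB GL (p - l) true || winL TB GL (p - l) false) Ls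
         else if l == r then
           has (fun GL => winL TB GL (p - l) false) Ls
         else
           all (fun GR => winL TB GR (p + r) true) Rs)
      else
        (if l < r then
           all (fun GR => winL TB GR (p + r) false && winL TB GR (p + r) true) Rs
         else if l == r then
           all (fun GR => winL TB GR (p + r) true) Rs
         else
           has (fun GL => winL TB GL (p - l) false) Ls))
      (iota 0 (TB - p).+1)) (iota 0 p.+1)
  end.

Inductive outcome : Type := L | R.

Definition o (TB : nat) (G : game) (p : nat) (m : bool) : outcome :=
  if winL TB G p m then L else R.

Definition outcome_le (a b : outcome) : bool :=
  match a, b with
  | L, R => false
  | _, _ => true
  end.

Definition game_ge (TB : nat) (G H : game) : Prop :=
  forall (X : game) (p : nat) (m : bool), p <= TB ->
    outcome_le (o TB (gadd H X) p m) (o TB (gadd G X) p m).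

Definition game_eq (TB : nat) (G H : game) : Prop :=
  game_ge TB G H /\ game_ge TB H G.

(* More money never hurts Left, but the tie-breaking marker alone may: winning a
   tie at a position without Left options loses.  The dyadic forms provide the
   right kind of slack: each 1/2^k is non-negative and worth at least the marker
   (adding it turns a Left win at p into one at \hat p), 1/2^(k+1) <= 1/2^k, and
   1/2^(k+1) together with the marker is at most 1/2^k.  Both inequalities between
   1/2^(k+1) + 1/2^(k+1) and 1/2^k then follow by letting Left copy a winning bid
   of the smaller game: a Right move without counterpart leaves Left with an
   extra summand worth the marker, and a Left move from 1/2^(k+1) + 1/2^(k+1) to
   1/2^(k+1) reaches a position no better for Left than 1/2^k itself. *)

From mathcomp Require Import all_boot zify.
From Stdlib Require List.
Import List(In, in_app_iff, in_map_iff, in_or_app, in_map).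

Set Implicit Arguments. Unset Strict Implicit. Unset Printing Implicit Defensive.

Definition lefts (G : game) : seq game := let: Game ls _ := G in ls.
Definition rights (G : game) : seq game := let: Game _ rs := G in rs.

Fixpoint game_ind_In (P : game -> Prop)
    (IH : forall ls rs, (forall g, In g ls -> P g) -> (forall g, In g rs -> P g) ->
      P (Game ls rs)) (G : game) : P G :=
  let: Game ls rs := G in
  let fix P_In s : forall g, In g s -> P g :=
    match s with
    | [::] => fun g hg => False_ind _ hg
    | x :: t => fun g hg =>
        match hg with
        | or_introl e => eq_ind x P (game_ind_In IH x) g e
        | or_intror hg' => P_In t g hg'
        end
    end in
  IH ls rs (P_In ls) (P_In rs).

Lemma hasP_In (T : Type) (f : pred T) (s : seq T) :
  reflect (exists2 x, In x s & f x) (has f s).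
Proof.
elim: s => [|y s IH] /=; first by right; case.
have [fy|nfy] /= := boolP (f y); first by left; exists y; [left|].
apply: (iffP IH) => -[x hx fx]; exists x => //; first by right.
by case: hx => // ey; move: nfy; rewrite ey fx.
Qed.

Lemma allP_In (T : Type) (f : pred T) (s : seq T) :
  reflect (forall x, In x s -> f x) (all f s).
Proof.
elim: s => [|y s IH] /=; first by left.
have [fy|nfy] /= := boolP (f y); last by right=> H; move: nfy; rewrite H //; left.
by apply: (iffP IH) => H x; [case=> [<-|/H] | move=> hx; apply: H; right].
Qed.

Lemma In_lefts_gaddl a A B : In a (lefts A) -> In (gadd a B) (lefts (gadd A B)).
Proof. by case: A B => [al ar] [bl br] ha; apply: in_or_app; left; exact: (in_map (gadd^~ _)). Qed.

Lemma In_lefts_gaddr b A B : In b (lefts B) -> In (gadd A b) (lefts (gadd A B)).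
Proof. by case: A B => [al ar] [bl br] hb; apply: in_or_app; right; exact: (in_map (gadd _)). Qed.

Lemma In_rights_gaddl a A B : In a (rights A) -> In (gadd a B) (rights (gadd A B)).
Proof. by case: A B => [al ar] [bl br] ha; apply: in_or_app; left; exact: (in_map (gadd^~ _)). Qed.

Lemma In_rights_gaddr b A B : In b (rights B) -> In (gadd A b) (rights (gadd A B)).
Proof. by case: A B => [al ar] [bl br] hb; apply: in_or_app; right; exact: (in_map (gadd _)). Qed.

Lemma In_lefts_gaddP x A B : In x (lefts (gadd A B)) ->
  (exists2 a, In a (lefts A) & x = gadd a B) \/ (exists2 b, In b (lefts B) & x = gadd A b).
Proof.
by case: A B => [al ar] [bl br] /in_app_iff[] /in_map_iff[y [<- hy]]; [left | right]; exists y.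
Qed.

Lemma In_rights_gaddP x A B : In x (rights (gadd A B)) ->
  (exists2 a, In a (rights A) & x = gadd a B) \/ (exists2 b, In b (rights B) & x = gadd A b).
Proof.
by case: A B => [al ar] [bl br] /in_app_iff[] /in_map_iff[y [<- hy]]; [left | right]; exists y.
Qed.

Lemma map_id_In (f : game -> game) s : (forall g, In g s -> f g = g) -> map f s = s.
Proof.
elim: s => //= x s IH H; rewrite H; last by left.
by rewrite IH // => g hg; apply: H; right.
Qed.

Lemma gadd0l G : gadd gzero G = G.
Proof. by elim/game_ind_In: G => gl gr IHl IHr /=; rewrite !map_id_In. Qed.

Lemma gadd0r G : gadd G gzero = G.
Proof. by elim/game_ind_In: G => gl gr IHl IHr /=; rewrite !cats0 !map_id_In. Qed.

(* Disjunctive sum is commutative and associative only up to this structural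
   simulation, which preserves wins at every budget state (sle_winL). *)
Inductive sle : game -> game -> Prop :=
  SleI A B :
    (forall a, In a (lefts A) -> exists2 b, In b (lefts B) & sle a b) ->
    (forall b, In b (rights B) -> exists2 a, In a (rights A) & sle a b) -> sle A B.

Lemma sle_inv A B : sle A B ->
  (forall a, In a (lefts A) -> exists2 b, In b (lefts B) & sle a b) /\
  (forall b, In b (rights B) -> exists2 a, In a (rights A) & sle a b).
Proof. by case. Qed.

Lemma sle_gaddr X A B : sle A B -> sle (gadd A X) (gadd B X).
Proof.
elim/game_ind_In: X A B => xl xr IHxl IHxr.
elim/game_ind_In => al ar IHl IHr B /sle_inv[hl hr]; set X := Game xl xr.
constructor=> c.
- case/In_lefts_gaddP=> [[a ha ->]|[x hx ->]].
    have [b hb hab] := hl a ha.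
    by exists (gadd b X); [exact: In_lefts_gaddl | exact: IHl].
  by exists (gadd B x); [exact: In_lefts_gaddr | exact: IHxl].
- case/In_rights_gaddP=> [[b hb ->]|[x hx ->]].
    have [a ha hab] := hr b hb.
    by exists (gadd a X); [exact: In_rights_gaddl | exact: IHr].
  by exists (gadd (Game al ar) x); [exact: In_rights_gaddr | exact: IHxr].
Qed.

Lemma sle_gaddC A B : sle (gadd A B) (gadd B A).
Proof.
elim/game_ind_In: A B => al ar IHal IHar.
elim/game_ind_In => bl br IHbl IHbr; constructor=> c.
- by case/In_lefts_gaddP=> [[a ha ->]|[b hb ->]];
    [exists (gadd (Game bl br) a); [exact: In_lefts_gaddr | exact: IHal]
    |exists (gadd b (Game al ar)); [exact: In_lefts_gaddl | exact: IHbl]].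
- by case/In_rights_gaddP=> [[b hb ->]|[a ha ->]];
    [exists (gadd (Game al ar) b); [exact: In_rights_gaddr | exact: IHbr]
    |exists (gadd a (Game bl br)); [exact: In_rights_gaddl | exact: IHar]].
Qed.

Lemma sle_gaddA A B C : sle (gadd A (gadd B C)) (gadd (gadd A B) C).
Proof.
elim/game_ind_In: A B C => al ar IHal IHar; set A := Game al ar.
elim/game_ind_In => bl br IHbl IHbr; set B := Game bl br.
elim/game_ind_In => cl cr IHcl IHcr; set C := Game cl cr.
constructor=> z.
- case/In_lefts_gaddP=> [[a ha ->]|[y /In_lefts_gaddP[[b hb ->]|[c hc ->]] ->]].
  + by exists (gadd (gadd a B) C); [do 2 apply: In_lefts_gaddl | exact: IHal].
  + by exists (gadd (gadd A b) C); [apply/In_lefts_gaddl/In_lefts_gaddr | exact: IHbl].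
  + by exists (gadd (gadd A B) c); [exact: In_lefts_gaddr | exact: IHcl].
- case/In_rights_gaddP=> [[y /In_rights_gaddP[[a ha ->]|[b hb ->]] ->]|[c hc ->]].
  + by exists (gadd a (gadd B C)); [exact: In_rights_gaddl | exact: IHar].
  + by exists (gadd A (gadd b C)); [apply/In_rights_gaddr/In_rights_gaddl | exact: IHbr].
  + by exists (gadd A (gadd B c)); [do 2 apply: In_rights_gaddr | exact: IHcr].
Qed.

Lemma sle_gaddA_sym A B C : sle (gadd (gadd A B) C) (gadd A (gadd B C)).
Proof.
elim/game_ind_In: A B C => al ar IHal IHar; set A := Game al ar.
elim/game_ind_In => bl br IHbl IHbr; set B := Game bl br.
elim/game_ind_In => cl cr IHcl IHcr; set C := Game cl cr.
constructor=> z.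
- case/In_lefts_gaddP=> [[y /In_lefts_gaddP[[a ha ->]|[b hb ->]] ->]|[c hc ->]].
  + by exists (gadd a (gadd B C)); [exact: In_lefts_gaddl | exact: IHal].
  + by exists (gadd A (gadd b C)); [apply/In_lefts_gaddr/In_lefts_gaddl | exact: IHbl].
  + by exists (gadd A (gadd B c)); [do 2 apply: In_lefts_gaddr | exact: IHcl].
- case/In_rights_gaddP=> [[a ha ->]|[y /In_rights_gaddP[[b hb ->]|[c hc ->]] ->]].
  + by exists (gadd (gadd a B) C); [do 2 apply: In_rights_gaddl | exact: IHar].
  + by exists (gadd (gadd A b) C); [apply/In_rights_gaddl/In_rights_gaddr | exact: IHbr].
  + by exists (gadd (gadd A B) c); [exact: In_rights_gaddr | exact: IHcr].
Qed.

Definition lwins_bid (m : bool) (l r : nat) : bool := if m then r <= l else r < l.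
Definition marker_after_lwin (m : bool) (l r : nat) (m' : bool) : bool := ~~ m' || m && (r < l).
Definition marker_after_rwin (m : bool) (l r : nat) (m' : bool) : bool := m' || ~~ m && (l < r).

Lemma marker_after_lwinW m l r m' : marker_after_lwin m l r m' -> m' ==> m.
Proof. by case: m m' => -[]. Qed.

Lemma marker_after_rwinW m l r m' : marker_after_rwin m l r m' -> m ==> m'.
Proof. by case: m m' => -[]. Qed.

Section Bidding.

Variable TB : nat.

Definition bid_winsb Ls Rs p (m : bool) (l r : nat) : bool :=
  if m then
    if r < l then has (fun GL => winL TB GL (p - l) true || winL TB GL (p - l) false) Ls
    else if l == r then has (fun GL => winL TB GL (p - l) false) Ls
    else all (fun GR => winL TB GR (p + r) true) Rs
  else
    if l < r then all (fun GR => winL TB GR (p + r) false && winL TB GR (p + r) true) Rs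
    else if l == r then all (fun GR => winL TB GR (p + r) true) Rs
    else has (fun GL => winL TB GL (p - l) false) Ls.

Lemma winL_Game Ls Rs p m : winL TB (Game Ls Rs) p m =
  has (fun l => all (bid_winsb Ls Rs p m l) (iota 0 (TB - p).+1)) (iota 0 p.+1).
Proof. by []. Qed.

Definition bid_wins G p m l r : Prop :=
  if lwins_bid m l r then
    exists GL m', [/\ In GL (lefts G), marker_after_lwin m l r m' & winL TB GL (p - l) m']
  else forall GR m', In GR (rights G) -> marker_after_rwin m l r m' -> winL TB GR (p + r) m'.

Lemma bid_winsP Ls Rs p m l r :
  reflect (bid_wins (Game Ls Rs) p m l r) (bid_winsb Ls Rs p m l r).
Proof.
rewrite /bid_winsb /bid_wins /lwins_bid /marker_after_lwin /marker_after_rwin /=.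
case: m; case: ltngtP => hlr /=; rewrite ?orbT ?orbF.
- apply: (iffP (hasP_In _ _)) => [[GL hGL /orP[] hw] | [GL [m' [hGL _ hw]]]].
  + by exists GL, true.
  + by exists GL, false.
  + by exists GL => //; case: m' hw => ->; rewrite ?orbT.
- by apply: (iffP (allP_In _ _)) => [H GR [] hGR // _ | H GR hGR]; apply: H.
- apply: (iffP (hasP_In _ _)) => [[GL hGL hw] | [GL [[] [hGL // _ hw]]]].
  + by exists GL, false.
  + by exists GL.
- apply: (iffP (hasP_In _ _)) => [[GL hGL hw] | [GL [[] [hGL // _ hw]]]].
  + by exists GL, false.
  + by exists GL.
- apply: (iffP (allP_In _ _)) => [H GR [] hGR _ | H GR hGR].
  + by case/andP: (H GR hGR).
  + by case/andP: (H GR hGR).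
  + by apply/andP; split; apply: H.
- by apply: (iffP (allP_In _ _)) => [H GR [] hGR // _ | H GR hGR]; apply: H.
Qed.

Lemma winLP G p m :
  reflect (exists2 l, l <= p & forall r, r <= TB - p -> bid_wins G p m l r) (winL TB G p m).
Proof.
case: G => Ls Rs; rewrite winL_Game; apply: (iffP hasP) => -[l].
- rewrite mem_iota => hl /allP H; exists l => [|r hr]; first by lia.
  by apply/bid_winsP; apply: H; rewrite mem_iota; lia.
- move=> hl H; exists l; first by rewrite mem_iota; lia.
  by apply/allP => r; rewrite mem_iota => hr; apply/bid_winsP; apply: H; lia.
Qed.

Lemma sle_winL A B p m : sle A B -> winL TB A p m -> winL TB B p m.
Proof.
elim/game_ind_In: A B p m => al ar IHl IHr B p m /sle_inv[hl hr] /winLP[l hlp H].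
apply/winLP; exists l => // r hr'; move: (H r hr'); rewrite /bid_wins; case: lwins_bid.
- case=> GL [m' [hGL hm hw]]; have [b hb hGLb] := hl GL hGL.
  by exists b, m'; split=> //; apply: IHl hGLb hw.
- move=> HR GR m' hGR hm; have [a ha haGR] := hr GR hGR.
  exact: IHr ha _ _ _ haGR (HR a m' ha hm).
Qed.

Lemma winL_budgetS G q m : q < TB -> winL TB G q m -> winL TB G q.+1 m.
Proof.
elim/game_ind_In: G q m => ls rs IHl IHr q m hq /winLP[l hl H].
apply/winLP; exists l => [|r hr]; first by lia.
move: (H r ltac:(lia)); rewrite /bid_wins; case: lwins_bid.
- case=> GL [m' [hGL hm hw]]; exists GL, m'; split=> //.
  by rewrite subSn //; apply: IHl => //; lia.
- move=> HR GR m' hGR hm; rewrite addSn; apply: IHr (HR _ _ hGR hm) => //; lia.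
Qed.

Lemma winL_mono G q q' m : q <= q' <= TB -> winL TB G q m -> winL TB G q' m.
Proof.
elim: q' => [|q' IH]; first by rewrite leqn0 => /andP[/eqP <-].
rewrite leq_eqVlt => /andP[/predU1P[<- // | hlt] hq'] hw.
by apply: winL_budgetS => //; apply: IH => //; lia.
Qed.

Definition game_le A B :=
  forall X p m, p <= TB -> winL TB (gadd A X) p m -> winL TB (gadd B X) p m.

Definition marker_le A B :=
  forall X p, p <= TB -> winL TB (gadd A X) p false -> winL TB (gadd B X) p true.

Definition worth_marker D := game_le gzero D /\ marker_le gzero D.

Lemma game_le_refl A : game_le A A.
Proof. by move=> X p m. Qed.

Lemma game_le_trans B A C : game_le A B -> game_le B C -> game_le A C.
Proof. by move=> hAB hBC X p m hp /hAB-/(_ hp)/hBC; apply. Qed.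

Lemma game_le_gaddr A B C : game_le A B -> game_le (gadd A C) (gadd B C).
Proof.
move=> hAB X p m hp /(sle_winL (sle_gaddA_sym _ _ _)) /hAB-/(_ hp) hB.
exact: sle_winL (sle_gaddA _ _ _) hB.
Qed.

Lemma game_le_gaddC A B : game_le (gadd A B) (gadd B A).
Proof. by move=> X p m _; apply/sle_winL/sle_gaddr/sle_gaddC. Qed.

Lemma winL_gadd_worth D Y p q m m' : worth_marker D -> p <= q <= TB -> m ==> m' ->
  winL TB Y p m -> winL TB (gadd D Y) q m'.
Proof.
case=> hD0 hDm hpq hmm' /(winL_mono hpq); rewrite -[Y in winL _ Y]gadd0l => hY.
have hq : q <= TB by case/andP: hpq.
by case: m m' hmm' hY => -[] // _; [exact: hD0 | exact: hDm | exact: hD0].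
Qed.

Lemma winL_gadd_le a B X q p m m' : q <= p <= TB -> m' ==> m ->
  game_le a B -> marker_le a B -> winL TB (gadd a X) q m' -> winL TB (gadd B X) p m.
Proof.
move=> hqp hmm' haB haBm hw; have hq : q <= TB by case/andP: hqp => ? ?; lia.
apply: winL_mono hqp _.
by case: m m' hmm' hw => -[] // _; [exact: haB | exact: haBm | exact: haB].
Qed.

(* Besides the usual matching of options, a Left option of A may be dominated by
   B itself (then Left's move wins B + X outright), and a Right option of B may
   dominate A plus a summand worth the marker. *)
Lemma game_le_opts A B :
  (forall a, In a (lefts A) ->
     (exists2 b, In b (lefts B) & game_le a b) \/ (game_le a B /\ marker_le a B)) ->
  (forall b, In b (rights B) ->
     (exists2 a, In a (rights A) & game_le a b) \/
     (exists2 D, worth_marker D & game_le (gadd D A) b)) ->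
  game_le A B.
Proof.
move=> hl hr X; elim/game_ind_In: X => xl xr IHl IHr p m hp hA; set X := Game xl xr in hA *.
have /orP[// | hB] := orbN (winL TB (gadd B X) p m).
case/winLP: (hA) => l hlp H; apply/winLP; exists l => // r hr'.
move: (H r hr'); rewrite /bid_wins; case: lwins_bid.
- case=> GL [m' [/In_lefts_gaddP[[a ha ->]|[x hx ->]] hm hw]].
  + case: (hl a ha) => [[b hb hab] | [haB haBm]].
      by exists (gadd b X), m'; split=> //; [exact: In_lefts_gaddl | apply: hab => //; lia].
    case/negP: hB; apply: winL_gadd_le haB haBm hw; last exact: marker_after_lwinW hm.
    by apply/andP; split; lia.
  + by exists (gadd B x), m'; split=> //; [exact: In_lefts_gaddr | apply: IHl => //; lia].
- move=> HR GR m' /In_rights_gaddP[[b hb ->]|[x hx ->]] hm.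
  + case: (hr b hb) => [[a ha hab] | [D hD hDA]].
      by apply: hab; [lia | apply: HR => //; exact: In_rights_gaddl].
    apply: hDA; first by lia.
    apply: sle_winL (sle_gaddA _ _ _) _; apply: winL_gadd_worth hD _ _ hA.
      by apply/andP; split; lia.
    exact: marker_after_rwinW hm.
  + by apply: IHr => //; [lia | apply: HR => //; exact: In_rights_gaddr].
Qed.

Lemma game_le0_rights D :
  (forall DR, In DR (rights D) -> worth_marker DR) -> game_le gzero D.
Proof.
move=> hD; apply: game_le_opts => // b hb; right; exists b; first exact: hD.
by rewrite gadd0r; apply: game_le_refl.
Qed.

Lemma worth_marker_opts D : In gzero (lefts D) ->
  (forall DR, In DR (rights D) -> worth_marker DR) -> worth_marker D.
Proof.
move=> h0 hD; have hD0 := game_le0_rights hD; split=> // Y p hp.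
rewrite gadd0l => hY; case/winLP: (hY) => l hl H; apply/winLP; exists l => // r hr.
move: (H r hr); rewrite /bid_wins /lwins_bid; case: (ltngtP r l) => hlr /=.
- case=> GL [[] [hGL // _ hw]].
  exists (gadd D GL), false; split=> //; first exact: In_lefts_gaddr.
  by apply: hD0; [lia | rewrite gadd0l].
- move=> HR GR m' /In_rights_gaddP[[DR hDR ->]|[y hy ->]] hm.
    by apply: winL_gadd_worth (hD DR hDR) _ _ hY => //; apply/andP; split; lia.
  by apply: hD0; [lia | rewrite gadd0l; apply: HR hy _; rewrite /marker_after_rwin hlr orbT].
- move=> _; subst r; case: l hl hr H => [|l] hl hr H.
    exists (gadd gzero Y), false; split=> //; first exact: In_lefts_gaddl.
    by rewrite gadd0l subn0.
  move: (H l ltac:(lia)); rewrite /bid_wins /= ltnSn => -[GL [[] [hGL // _ hw]]].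
  exists (gadd D GL), false; split=> //; first exact: In_lefts_gaddr.
  by apply: hD0; [lia | rewrite gadd0l].
Qed.

Lemma marker_le_step D : lefts D = [:: gzero] -> game_le (Game [:: gzero] [:: D]) D ->
  (forall DR, In DR (rights D) -> marker_le D DR) -> marker_le (Game [:: gzero] [:: D]) D.
Proof.
set D1 := Game [:: gzero] [:: D] => hlD hle hDR X.
elim/game_ind_In: X => xl xr IHl IHr p hp; set X := Game xl xr => hw.
have hD_D1 : In D (rights D1) by left.
case/winLP: (hw) => -[|l] hl H.
  (* A winning bid 0 survives Right's tie-win D1 -> D, which hands Left the marker. *)
  move: (H 0 ltac:(lia)); rewrite /bid_wins [lwins_bid _ _ _]/= addn0 => HR.
  exact: HR (gadd D X) true (In_rights_gaddl _ hD_D1) isT.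
apply/winLP; exists l.+1 => // r hr; rewrite /bid_wins [lwins_bid _ _ _]/=.
case: (leqP r l.+1) => hrl.
- (* Against r, Left makes the move of its marker-less win against minn r l < l.+1. *)
  move: (H (minn r l) ltac:(lia)); rewrite /bid_wins [lwins_bid _ _ _]/= ltnS geq_minr.
  case=> GL [[] [/In_lefts_gaddP[[a [<-|//] ->]|[x hx ->]] // _ hw']].
    exists (gadd gzero X), false; split=> //.
    by apply: In_lefts_gaddl; rewrite hlD; left.
  move: hrl; rewrite leq_eqVlt => /predU1P[-> | hrl].
    exists (gadd D x), false; split=> //; first exact: In_lefts_gaddr.
    by apply: hle => //; lia.
  exists (gadd D x), true; split=> //; first exact: In_lefts_gaddr.
  by apply: IHl => //; lia.
- move=> GR [] hGR // _.
  have hlw : lwins_bid false l.+1 r = false by rewrite /lwins_bid leq_gtF // ltnW.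
  move: (H r hr); rewrite /bid_wins hlw => HR.
  have hDX : winL TB (gadd D X) (p + r) false.
    by apply: HR; [exact: In_rights_gaddl _ hD_D1 | rewrite /marker_after_rwin hrl].
  case/In_rights_gaddP: hGR => [[DR hDR0 ->]|[x hx ->]].
    by apply: (hDR _ hDR0 X) hDX; lia.
  apply: IHr => //; first by lia.
  by apply: HR; [exact: In_rights_gaddr | rewrite /marker_after_rwin hrl].
Qed.

Lemma lefts_dyad k : lefts (dyad k) = [:: gzero].
Proof. by case: k. Qed.

Lemma dyad_worth_marker k : worth_marker (dyad k).
Proof.
elim: k => [|k IH]; apply: worth_marker_opts; rewrite ?lefts_dyad; try by left.
  by move=> DR [].
by move=> DR [<-|].
Qed.

Lemma dyad_leS k : game_le (dyad k.+1) (dyad k).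
Proof.
elim: k => [|k IH]; apply: game_le_opts => [a [<-|//] | b //].
- by left; exists gzero; [left | apply: game_le_refl].
- by left; exists gzero; [left | apply: game_le_refl].
- by case=> [<-|//]; left; exists (dyad k.+1); [left | ].
Qed.

Lemma dyad_marker_leS k : marker_le (dyad k.+1) (dyad k).
Proof.
elim: k => [|k IH]; apply: marker_le_step => //.
- exact: (dyad_leS (k := 0)).
- exact: (dyad_leS (k := k.+1)).
- by move=> DR [<-|].
Qed.

Lemma dyad_le_double k : game_le (dyad k) (gadd (dyad k.+1) (dyad k.+1)).
Proof.
have [hD0 _] := dyad_worth_marker k.+1.
apply: game_le_opts => [a | b].
  rewrite lefts_dyad => -[<-|//]; left; exists (gadd gzero (dyad k.+1)).
    by apply: In_lefts_gaddl; left.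
  by rewrite gadd0l.
case/In_rights_gaddP=> [[d [<-|//] ->]|[d [<-|//] ->]]; right; exists (dyad k.+1);
  by [exact: dyad_worth_marker | exact: game_le_gaddC | exact: game_le_refl].
Qed.

Lemma double_le_dyad k : game_le (gadd (dyad k.+1) (dyad k.+1)) (dyad k).
Proof.
elim: k => [|k IH];
  apply: game_le_opts => [a /In_lefts_gaddP[[z [<-|//] ->]|[z [<-|//] ->]] | b];
  rewrite ?gadd0l ?gadd0r; try by right; split; [exact: dyad_leS | exact: dyad_marker_leS].
  by [].
case=> [<-|//]; left; exists (gadd (dyad k.+2) (dyad k.+1)).
  by apply: In_rights_gaddr; left.
apply: game_le_trans IH; exact: game_le_gaddr (dyad_leS (k := k.+1)).
Qed.
End Bidding.

Lemma game_geP TB G H : game_ge TB G H <-> game_le TB H G.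
Proof.
rewrite /game_ge /game_le /outcome_le /o.
by split=> hHG X p m hp; move: (hHG X p m hp); case: winL; case: winL => // /(_ isT).
Qed.

Unset Implicit Arguments.

Theorem mainTheorem18 (TB : nat) (k : nat) (hk : 1 <= k) :
  game_eq TB (gadd (dyad k) (dyad k)) (dyad k.-1).
Proof.
case: k hk => // k _; split; apply/game_geP.
- exact: dyad_le_double.
- exact: double_le_dyad.
Qed.
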